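(* Let $m,k$ be integers with $1\le k\le m$. Let $p$ be a real polynomial of degree at most $2m-k-1$ and $q$ a real polynomial of degree at most $k-1$. Let $t_1,\dots,t_m$ be distinct numbers in $(0,1)$ such that for all $i=1,\dots,m$, $$p^{\mathrm{even}}(t_i)+q^{\mathrm{odd}}(t_i)(1-t_i^2)^{m-k}=0\quad\text{and}\quad p^{\mathrm{odd}}(t_i)+q^{\mathrm{even}}(t_i)(1-t_i^2)^{m-k}=0.$$ Then $p\equiv0$ and $q\equiv0$.
   Context: For a polynomial $p(t)=\sum_{j=0}^N c_jt^j$, $p^{\mathrm{even}}(t)=\sum_{2j\le N}c_{2j}t^{2j}$ and $p^{\mathrm{odd}}(t)=\sum_{1\le 2j-1\le N}c_{2j-1}t^{2j-1}$. *)

From HB Require Import structures.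
From mathcomp Require Import all_boot all_order all_algebra.
From mathcomp Require Import reals.
Set Implicit Arguments. Unset Strict Implicit. Unset Printing Implicit Defensive.
Import Order.TTheory GRing.Theory Num.Theory.
Local Open Scope ring_scope.

(* Even / odd parts of a polynomial, as in the paper:
   p^even(t) = sum_{2j <= N} c_{2j} t^{2j},  p^odd(t) = sum c_{2j-1} t^{2j-1}.
   (Not MathComp's even_poly/odd_poly, which are compressed in degree.) *)
Definition peven (R : nzRingType) (p : {poly R}) : {poly R} :=
  \poly_(i < size p) (if ~~ odd i then p`_i else 0).
Definition podd (R : nzRingType) (p : {poly R}) : {poly R} :=
  \poly_(i < size p) (if odd i then p`_i else 0).

From HB Require Import structures.
From mathcomp Require Import all_boot all_order all_algebra.
From mathcomp Require Import reals ring zify.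
From mathcomp Require Import normedtype derive realfun.
Import Order.TTheory GRing.Theory Num.Theory.
Import numFieldNormedType.Exports.
Local Open Scope ring_scope.

(* Adding and subtracting the two hypotheses gives
   p(t) + q(t) (1 - t^2)^r = 0 and p(-t) - q(-t) (1 - t^2)^r = 0 at each t = t_i,
   where r = m - k.  The Cayley transform y = (1 + x) / (1 - x), applied to
   homogenized versions P of p and Q of q, turns these into m roots y > 1 of
   P + y^r Q and m roots 0 < y < 1 of P - y^r Q, with deg P < m + r and
   deg Q < m - r.  The operator prod_(r <= j < m) (y d/dy - j) annihilates y^r Q
   and, by Rolle's theorem applied to y^-j f, each factor loses at most one
   positive root; so it maps P to a polynomial with 2r positive roots but only
   2r monomials, which vanishes by Descartes' rule of signs.  Hence P has its
   monomials in degrees [r, m), and P + y^r Q, P - y^r Q, having m monomials and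
   m positive roots, both vanish. *)

Section EulerOperator.
Context {R : numDomainType}.
Implicit Types (f g : {poly R}) (j : nat) (js : seq nat).

Definition euler_op j f : {poly R} := 'X * f^`() - j%:R *: f.

Definition euler_ops js f : {poly R} := foldr euler_op f js.

Lemma coef_euler_op j f i : (euler_op j f)`_i = (i%:R - j%:R) * f`_i.
Proof.
rewrite /euler_op coefB coefXM coefZ coef_deriv.
by case: i => [|i] /=; rewrite ?sub0r ?mulNr // mulrBl !mulr_natl.
Qed.

Lemma coef_euler_ops js f i :
  (euler_ops js f)`_i = (\prod_(j <- js) (i%:R - j%:R)) * f`_i.
Proof.
elim: js => [|j js IH] /=; first by rewrite big_nil mul1r.
by rewrite coef_euler_op IH big_cons mulrA.
Qed.

Lemma prod_natr_sub_eq0 js i : i \in js -> \prod_(j <- js) (i%:R - j%:R : R) = 0.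
Proof.
move=> i_js; apply/eqP; rewrite prodf_seq_eq0.
by apply/hasP; exists i; rewrite /= ?subrr.
Qed.

Lemma euler_opsD js f g : euler_ops js (f + g) = euler_ops js f + euler_ops js g.
Proof. by apply/polyP => i; rewrite coefD !coef_euler_ops coefD mulrDr. Qed.

Lemma euler_opsN js f : euler_ops js (- f) = - euler_ops js f.
Proof. by apply/polyP => i; rewrite coefN !coef_euler_ops coefN mulrN. Qed.

Lemma euler_ops_eq0 js f : euler_ops js f = 0 <-> forall i, i \notin js -> f`_i = 0.
Proof.
split=> [Lf0 i i_js | f_js].
  have /eqP := congr1 (fun h : {poly R} => h`_i) Lf0.
  rewrite coef_euler_ops coef0 mulf_eq0 prodf_seq_eq0 => /orP[/hasP[j j_js]|/eqP //].
  by rewrite /= subr_eq0 eqr_nat => /eqP ij; rewrite ij j_js in i_js.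
apply/polyP => i; rewrite coef_euler_ops coef0.
by have [/prod_natr_sub_eq0 ->|/f_js ->] := boolP (i \in js); rewrite ?mul0r ?mulr0.
Qed.

Lemma euler_op_eq0 j f : euler_op j f = 0 -> f = f`_j *: 'X^j.
Proof.
move=> /(euler_ops_eq0 [:: j]) f_j; apply/polyP => i.
rewrite coefZ coefXn; have [->|ij] := eqVneq i j; first by rewrite mulr1.
by rewrite mulr0 f_j // inE ij.
Qed.

Lemma coef_XnM_out (m r : nat) g i :
  (size g <= m - r)%N -> ~~ (r <= i < m)%N -> ('X^r * g)`_i = 0.
Proof.
move=> szg; rewrite negb_and -!ltnNge coefXnM.
case/orP=> [-> //|mi]; case: ltnP => // ri.
by rewrite nth_default // (leq_trans szg) // leq_sub2r.
Qed.

Lemma addsub_XnM_eq0 (r : nat) f g :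
  f + 'X^r * g = 0 -> f - 'X^r * g = 0 -> f = 0 /\ g = 0.
Proof.
move=> add0 sub0.
have : (f + 'X^r * g) - (f - 'X^r * g) = ('X^r * g) *+ 2 by ring.
rewrite add0 sub0 subrr => /esym/eqP.
rewrite -mulr_natl mulf_eq0 -polyC_natr polyC_eq0 pnatr_eq0 /= mulf_eq0 expf_eq0 polyX_eq0 andbF /= => /eqP g0.
by move: add0; rewrite g0 mulr0 addr0.
Qed.

Lemma mulX_derivXn j : 'X * ('X^j)^`() = j%:R *: 'X^j :> {poly R}.
Proof.
rewrite derivXn; case: j => [|j]; first by rewrite !scale0r mulr0.
by rewrite mulrnAr -exprS scaler_nat.
Qed.

End EulerOperator.

Section PositiveRoots.
Context {R : realType}.
Implicit Types (f g : {poly R}) (j : nat) (js : seq nat) (I : interval R).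

(* Rolle's theorem for [x ^- j * f x], whose derivative is [x ^- j.+1 * (euler_op j f).[x]]. *)
Lemma euler_op_root_between j f {a b} : 0 < a -> a < b ->
  root f a -> root f b -> exists2 c, a < c < b & root (euler_op j f) c.
Proof.
move=> a_gt0 ab /eqP fa /eqP fb.
pose phi := horner f \* (fun x : R => ('X^j).[x]^-1).
have Xj_neq0 (x : R) : 0 < x -> ('X^j).[x] != 0 :> R.
  by move=> x_gt0; rewrite hornerXn expf_neq0 // gt_eqF.
have phi_der (x : R) : 0 < x -> is_derive x 1 phi
    (f.[x] *: (- ('X^j).[x] ^- 2 *: ('X^j)^`().[x]) + ('X^j).[x]^-1 *: f^`().[x]).
  move=> x_gt0; apply: is_deriveM.
  exact: is_deriveV (Xj_neq0 _ x_gt0) (is_derive_poly _ _).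
have [|||c] := @Rolle R phi a b ab.
- move=> x; rewrite in_itv /= => /andP[ax _].
  by case: (phi_der x (lt_trans a_gt0 ax)).
- apply: derivable_within_continuous => x; rewrite in_itv /= => /andP[ax _].
  by case: (phi_der x (lt_le_trans a_gt0 ax)).
- by rewrite /phi /= fa fb !mul0r.
rewrite in_itv /= => /andP[ac cb] dc.
have c_gt0 : 0 < c := lt_trans a_gt0 ac.
exists c; first by rewrite ac cb.
have XD : c * ('X^j)^`().[c] = j%:R * c ^+ j.
  by have := congr1 (horner^~ c) (mulX_derivXn j); rewrite !hornerE.
have cj : c ^+ j != 0 by rewrite expf_neq0 // gt_eqF.
have := @derive_val _ _ _ _ _ _ _ (phi_der c c_gt0).
rewrite (@derive_val _ _ _ _ _ _ _ dc) /root /euler_op !hornerE /=.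
move: XD; move: ('X^j)^`().[c] (c ^+ j) cj => z w w0 XD.
have -> : j%:R = c * z / w by rewrite XD mulfK.
rewrite /GRing.scale /= => D0; apply/eqP.
by rewrite -(mulr0 (c * w)) D0; field.
Qed.

Definition roots_in (I : interval R) g n := exists s : seq R,
  [/\ size s = n, uniq s, {subset s <= I} & all (root g) s].

Lemma roots_in_leq {I g n n'} : (n' <= n)%N -> roots_in I g n -> roots_in I g n'.
Proof.
move=> le_n'n [s [sz_s uniq_s sI rs]]; exists (take n' s); split.
- by rewrite size_takel // sz_s.
- exact: take_uniq.
- by move=> x /mem_take /sI.
- by apply/allP => x /mem_take /(allP rs).
Qed.

Lemma roots_in_cat (b a : R) g n1 n2 : b <= a ->
  roots_in `]b, a[ g n1 -> roots_in `]a, +oo[ g n2 -> roots_in `]b, +oo[ g (n1 + n2).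
Proof.
move=> ba [s1 [sz_s1 uniq_s1 s1I rs1]] [s2 [sz_s2 uniq_s2 s2I rs2]].
have s1_lt x : x \in s1 -> b < x < a by move/s1I; rewrite in_itv.
have s2_gt x : x \in s2 -> a < x by move/s2I; rewrite in_itv /= andbT.
exists (s1 ++ s2); split.
- by rewrite size_cat sz_s1 sz_s2.
- rewrite cat_uniq uniq_s1 uniq_s2 andbT; apply/hasPn => x /s2_gt ax.
  by apply/negP => /s1_lt /andP[_]; rewrite ltNge (ltW ax).
- move=> x; rewrite mem_cat in_itv /= andbT => /orP[/s1_lt /andP[] //|/s2_gt].
  exact: le_lt_trans ba.
- by rewrite all_cat rs1 rs2.
Qed.

Lemma roots_in_image {I g m} (u : 'I_m -> R) : injective u ->
  (forall i, u i \in I) -> (forall i, root g (u i)) -> roots_in I g m.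
Proof.
move=> u_inj uI ru; exists [seq u i | i <- enum 'I_m]; split.
- by rewrite size_map size_enum_ord.
- by rewrite map_inj_uniq ?enum_uniq.
- by move=> _ /mapP[i _ ->].
- by apply/allP => _ /mapP[i _ ->].
Qed.

Section PositiveInterval.
Context {I : interval R}.
Hypothesis I_gt0 : {subset I <= `]0, +oo[}.

Lemma euler_op_roots_path j g {a s} : a \in I -> {subset s <= I} ->
  path <%R a s -> all (root g) (a :: s) ->
  exists s', [/\ size s' = size s, path <%R a s', {subset s' <= I}
                & all (root (euler_op j g)) s'].
Proof.
elim: s a => [|b s IH] a aI sI; first by exists [::].
rewrite /= => /andP[ab path_s] /andP[ra rbs]; have /andP[rb _] := rbs.
have a_gt0 : 0 < a by have := I_gt0 _ aI; rewrite in_itv /= andbT.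
have bI : b \in I by apply: sI; rewrite mem_head.
have [c /andP[ac cb] rc] := euler_op_root_between j g a_gt0 ab ra rb.
have cI : c \in I.
  by apply: ((is_intervalPlt _).1 (@interval_is_interval _ I) a b aI bI c); rewrite ac.
have s_I : {subset s <= I} by move=> x xs; apply: sI; rewrite inE xs orbT.
have [s' [sz_s' path_s' s'I rs']] := IH b bI s_I path_s rbs.
exists (c :: s'); split => /=.
- by rewrite sz_s'.
- by rewrite ac (path_le (@lt_trans _ _) cb).
- by move=> x; rewrite inE => /predU1P[->|/s'I].
- by rewrite rc.
Qed.

Lemma roots_in_euler_op j g n : roots_in I g n.+1 -> roots_in I (euler_op j g) n.
Proof.
move=> [s [sz_s uniq_s sI rs]].
have perm_s : perm_eq (sort <=%R s) s by rewrite perm_sort.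
have := sort_lt_sorted s; rewrite uniq_s.
have sortI : {subset sort <=%R s <= I} by move=> x; rewrite (perm_mem perm_s) => /sI.
have := perm_all (root g) perm_s; rewrite rs.
move: (perm_size perm_s) sortI; rewrite sz_s.
case: (sort _ _) => [|a s0] //= [sz_s0] s0I rs0 path_s0.
have [s' [sz_s' path_s' s'I rs']] :=
  euler_op_roots_path j g (s0I a (mem_head _ _)) (fun x xs => s0I x (mem_behead xs))
    path_s0 rs0.
exists s'; split => //; first by rewrite sz_s'.
exact: lt_sorted_uniq (path_sorted path_s').
Qed.

Lemma roots_in_euler_ops js g n :
  roots_in I g (size js + n) -> roots_in I (euler_ops js g) n.
Proof.
elim: js n => [|j js IH] n //= rg.
by apply: roots_in_euler_op; apply: IH; rewrite addnS.
Qed.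

Lemma sparse_poly_eq0 {S : seq nat} {g n} :
  (forall i, i \notin S -> g`_i = 0) -> (size S <= n)%N -> roots_in I g n -> g = 0.
Proof.
elim: S g n => [|j S IH] g n g_S le_Sn rg.
  by apply/polyP => i; rewrite coef0 g_S.
have {le_Sn}rg : roots_in I g (size S).+1 := roots_in_leq le_Sn rg.
have /euler_op_eq0 g_mono : euler_op j g = 0.
  apply: (IH _ (size S)) => //; last exact: roots_in_euler_op.
  move=> i iS; rewrite coef_euler_op.
  have [->|ij] := eqVneq i j; first by rewrite subrr mul0r.
  by rewrite g_S ?mulr0 // inE negb_or ij.
case: rg => -[|c s] [// _ _ sI /andP[rc _]].
have c_gt0 : 0 < c by have := I_gt0 _ (sI c (mem_head _ _)); rewrite in_itv /= andbT.
move: rc; rewrite g_mono /root hornerZ hornerXn mulf_eq0 expf_eq0 (gt_eqF c_gt0) andbF orbF.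
by move/eqP ->; rewrite scale0r.
Qed.

End PositiveInterval.

Lemma gt1_subset_gt0 : {subset `]1, +oo[ <= (`]0, +oo[ : interval R)}.
Proof. by apply: subitvP; rewrite subitvE /= bnd_simp ler01. Qed.

Lemma itv01_subset_gt0 : {subset `]0, 1[ <= (`]0, +oo[ : interval R)}.
Proof. by apply: subitvP; rewrite subitvE /= bnd_simp lexx. Qed.

Lemma roots_addsub_XnM_eq0 (m r : nat) (P Q : {poly R}) : (r <= m)%N ->
  (size P <= m + r)%N -> (size Q <= m - r)%N ->
  roots_in `]1, +oo[ (P + 'X^r * Q) m -> roots_in `]0, 1[ (P - 'X^r * Q) m ->
  P = 0 /\ Q = 0.
Proof.
move=> le_rm szP szQ r_add r_sub.
set js := iota r (m - r).
have mem_js i : (i \in js) = (r <= i < m)%N by rewrite mem_iota subnKC.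
have size_js : (size js + r = m)%N by rewrite size_iota subnK.
have XQ_js i : i \notin js -> ('X^r * Q)`_i = 0 by rewrite mem_js; apply: coef_XnM_out.
have LXQ : euler_ops js ('X^r * Q) = 0 := (euler_ops_eq0 _ _).2 XQ_js.
have LP_gt1 : roots_in `]1, +oo[ (euler_ops js P) r.
  have := euler_opsD js P ('X^r * Q); rewrite LXQ addr0 => <-.
  by apply: roots_in_euler_ops; rewrite ?size_js //; apply: gt1_subset_gt0.
have LP_lt1 : roots_in `]0, 1[ (euler_ops js P) r.
  have := euler_opsD js P (- ('X^r * Q)); rewrite euler_opsN LXQ oppr0 addr0 => <-.
  by apply: roots_in_euler_ops; rewrite ?size_js //; apply: itv01_subset_gt0.
have P_js : forall i, i \notin js -> P`_i = 0.
  apply/euler_ops_eq0; apply: (@sparse_poly_eq0 _ (fun _ => id) (iota 0 r ++ iota m r) _ (r + r)).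
  - move=> i; rewrite mem_cat !mem_iota /= negb_or => /andP[ri mri].
    rewrite coef_euler_ops; have [im|mi] := ltnP i m.
      by rewrite prod_natr_sub_eq0 ?mul0r // mem_js im andbT leqNgt.
    by rewrite nth_default ?mulr0 // (leq_trans szP) //; rewrite mi /= -leqNgt in mri.
  - by rewrite size_cat !size_iota.
  - exact: roots_in_cat ler01 LP_lt1 LP_gt1.
have le_js_m : (size js <= m)%N by rewrite -size_js leq_addr.
apply: (addsub_XnM_eq0 r).
  apply: (sparse_poly_eq0 gt1_subset_gt0 _ le_js_m r_add) => i i_js.
  by rewrite coefD P_js ?XQ_js ?addr0.
apply: (sparse_poly_eq0 itv01_subset_gt0 _ le_js_m r_sub) => i i_js.
by rewrite coefB P_js ?XQ_js ?subr0.
Qed.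

End PositiveRoots.

Section Cayley.
Context {R : numFieldType}.
Implicit Types (p q : {poly R}) (x : R).

Definition cayley x := (1 + x) / (1 - x).

(* [(y + 1)^(n-1) p((y - 1) / (y + 1))], i.e. p read through [y = cayley x]. *)
Definition cayley_poly n p : {poly R} :=
  \sum_(i < n) p`_i *: (('X - 1) ^+ i * ('X + 1) ^+ (n.-1 - i)).

Lemma size_cayley_poly n p : (size (cayley_poly n p) <= n)%N.
Proof.
apply: (leq_trans (size_sum _ _ _)); apply/bigmax_leqP => i _.
apply: (leq_trans (size_scale_leq _ _)); apply: (leq_trans (size_polyMleq _ _)).
have -> : 'X + 1 = 'X - (-1)%:P :> {poly R} by rewrite polyCN opprK.
rewrite -polyC1 !size_exp_XsubC /=.
by have := ltn_ord i; lia.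
Qed.

Lemma horner_cayley_poly {n p x} : x != 1 -> (size p <= n)%N ->
  (cayley_poly n p).[cayley x] = (2 / (1 - x)) ^+ n.-1 * p.[x].
Proof.
move=> x1 szp; have x1' : 1 - x != 0 by rewrite subr_eq0 eq_sym.
have cayleyB1 : cayley x - 1 = 2 / (1 - x) * x by rewrite /cayley; field.
have cayleyD1 : cayley x + 1 = 2 / (1 - x) by rewrite /cayley; field.
rewrite horner_sum (horner_coef_wide x szp) mulr_sumr; apply: eq_bigr => i _.
rewrite hornerZ hornerM !horner_exp !(hornerD, hornerN, hornerX, hornerC) cayleyB1 cayleyD1.
have le_in : (i <= n.-1)%N by have := ltn_ord i; lia.
by rewrite -[in RHS](subnKC le_in) exprD exprMn; ring.
Qed.

Lemma cayley_poly_eq0 n p : (size p <= n)%N -> (cayley_poly n p == 0) = (p == 0).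
Proof.
move=> szp; apply/eqP/eqP => [Cp0|->]; last first.
  by apply: big1 => i _; rewrite coef0 scale0r.
pose u i : R := (i.+2)%:R^-1.
apply: (@roots_geq_poly_eq0 _ p [seq u i | i <- iota 0 (size p)]); last first.
- by rewrite size_map size_iota.
- by rewrite map_inj_uniq ?iota_uniq // => i j /invr_inj /eqP; rewrite eqr_nat => /eqP[].
apply/allP => _ /mapP[i _ ->]; have ui1 : u i != 1 by rewrite invr_eq1 pnatr_eq1.
have /esym/eqP := horner_cayley_poly ui1 szp; rewrite Cp0 horner0.
by rewrite mulf_eq0 expf_eq0 mulf_eq0 invr_eq0 subr_eq0 (eq_sym 1) (negbTE ui1) pnatr_eq0 andbF.
Qed.

Lemma cayley_inj : {in [pred x | x != 1] &, injective cayley}.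
Proof.
have cayleyK x : x != 1 -> (cayley x - 1) / (cayley x + 1) = x.
  move=> x1; have x1' : 1 - x != 0 by rewrite subr_eq0 eq_sym.
  rewrite /cayley; field.
  have -> : 1 + x + (1 - x) = 2 :> R by ring.
  by rewrite x1' pnatr_eq0.
by move=> x y x1 y1 exy; rewrite -(cayleyK x) // exy cayleyK.
Qed.

Lemma cayley_gt1 x : 0 < x < 1 -> 1 < cayley x.
Proof.
move=> /andP[x_gt0 x_lt1].
by rewrite /cayley ltr_pdivlMr ?subr_gt0 // mul1r ltrBlDr -addrA ltrDl addr_gt0.
Qed.

Lemma cayleyN_itv x : 0 < x < 1 -> 0 < cayley (- x) < 1.
Proof.
move=> /andP[x_gt0 x_lt1].
rewrite /cayley opprK divr_gt0 ?subr_gt0 ?addr_gt0 //=.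
by rewrite ltr_pdivrMr ?addr_gt0 // mul1r ltrD2l gtrN.
Qed.

Lemma horner_cayley_addXnM (m r : nat) (s : R) p q x : (r < m)%N -> x != 1 ->
  (size p <= m + r)%N -> (size q <= m - r)%N ->
  (cayley_poly (m + r) p + s *: ('X^r * (4 ^+ r *: cayley_poly (m - r) q))).[cayley x]
  = (2 / (1 - x)) ^+ (m + r).-1 * (p.[x] + s * q.[x] * (1 - x ^+ 2) ^+ r).
Proof.
move=> rm x1 szp szq; have x1' : 1 - x != 0 by rewrite subr_eq0 eq_sym.
have four_cayley : 4 * cayley x = (2 / (1 - x)) ^+ 2 * (1 - x ^+ 2).
  by rewrite /cayley; field.
rewrite hornerD hornerZ hornerM hornerXn hornerZ !horner_cayley_poly //.
set c := 2 / (1 - x) in four_cayley *.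
have key : cayley x ^+ r * 4 ^+ r = c ^+ (r + r) * (1 - x ^+ 2) ^+ r.
  by rewrite -exprMn mulrC four_cayley exprMn -exprM mul2n -addnn.
have -> : (m + r).-1 = ((m - r).-1 + (r + r))%N by lia.
by rewrite mulrA key !exprD; ring.
Qed.
End Cayley.

Section EvenOddParts.
Context {R : nzRingType}.
Implicit Types (p q : {poly R}) (x w : R).

Lemma horner_peven_add_podd p x : (peven p).[x] + (podd p).[x] = p.[x].
Proof.
rewrite !horner_poly -big_split horner_coef; apply: eq_bigr => i _ /=.
by case: (odd i); rewrite mul0r ?addr0 ?add0r.
Qed.

Lemma horner_peven_sub_podd p x : (peven p).[x] - (podd p).[x] = p.[- x].
Proof.
rewrite !horner_poly -sumrN -big_split horner_coef; apply: eq_bigr => i _ /=.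
rewrite exprNn -signr_odd.
by case: (odd i); rewrite mul0r ?oppr0 ?addr0 ?add0r ?expr0 ?mul1r // expr1 !mulN1r mulrN.
Qed.

Lemma horner_parts_add_eq0 p q x w :
  (peven p).[x] + (podd q).[x] * w = 0 -> (podd p).[x] + (peven q).[x] * w = 0 ->
  p.[x] + q.[x] * w = 0.
Proof.
move=> e1 e2; rewrite -horner_peven_add_podd -(horner_peven_add_podd q) mulrDl.
by rewrite [_ * _ + _]addrC addrACA e1 e2 addr0.
Qed.

Lemma horner_parts_sub_eq0 p q x w :
  (peven p).[x] + (podd q).[x] * w = 0 -> (podd p).[x] + (peven q).[x] * w = 0 ->
  p.[- x] - q.[- x] * w = 0.
Proof.
move=> e1 e2; rewrite -horner_peven_sub_podd -(horner_peven_sub_podd q) mulrBl.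
by rewrite opprB addrACA -opprD e1 e2 subr0.
Qed.

End EvenOddParts.

Theorem proposition2p5 (R : realType) (m k : nat)
  (hk1 : (1 <= k)%N) (hkm : (k <= m)%N)
  (p q : {poly R})
  (hp : (size p <= 2 * m - k)%N) (hq : (size q <= k)%N)
  (t : 'I_m -> R) (ht_inj : injective t)
  (ht01 : forall i, 0 < t i < 1)
  (h1 : forall i, (peven p).[t i] + (podd q).[t i] * (1 - t i ^+ 2) ^+ (m - k) = 0)
  (h2 : forall i, (podd p).[t i] + (peven q).[t i] * (1 - t i ^+ 2) ^+ (m - k) = 0) :
  p = 0 /\ q = 0.
Proof.
set r := (m - k)%N in h1 h2 *.
have rm : (r < m)%N by rewrite /r; lia.
have szp : (size p <= m + r)%N by rewrite /r; lia.
have szq : (size q <= m - r)%N by rewrite /r; lia.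
have t_neq1 i : t i != 1 by rewrite lt_eqF //; case/andP: (ht01 i).
have tN_neq1 i : - t i != 1.
  by rewrite lt_eqF // (lt_trans _ ltr01) // oppr_lt0; case/andP: (ht01 i).
have eq_add i : p.[t i] + 1 * q.[t i] * (1 - t i ^+ 2) ^+ r = 0.
  by rewrite mul1r; apply: horner_parts_add_eq0.
have eq_sub i : p.[- t i] + -1 * q.[- t i] * (1 - (- t i) ^+ 2) ^+ r = 0.
  by rewrite sqrrN mulN1r mulNr; apply: horner_parts_sub_eq0.
set P := cayley_poly (m + r) p; set Q := 4 ^+ r *: cayley_poly (m - r) q.
have [P0 Q0] : P = 0 /\ Q = 0.
  apply: (@roots_addsub_XnM_eq0 _ m r); first exact: ltnW.
  - exact: size_cayley_poly.
  - exact: leq_trans (size_scale_leq _ _) (size_cayley_poly _ _).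
  - apply: (roots_in_image (fun i => cayley (t i))) => [i j /cayley_inj|i|i].
    + by move=> tij; apply/ht_inj/tij; rewrite inE.
    + by rewrite in_itv /= andbT cayley_gt1.
    + by rewrite /root -[_ * Q]scale1r horner_cayley_addXnM // eq_add mulr0.
  - apply: (roots_in_image (fun i => cayley (- t i))) => [i j /cayley_inj|i|i].
    + by move=> tij; apply/ht_inj/oppr_inj/tij; rewrite inE.
    + by rewrite in_itv /= cayleyN_itv.
    + by rewrite /root -scaleN1r horner_cayley_addXnM // eq_sub mulr0.
move: Q0 => /eqP; rewrite scaler_eq0 expf_eq0 pnatr_eq0 andbF /=.
by move/eqP: P0; rewrite !cayley_poly_eq0 // => /eqP-> /eqP->.
Qed.
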